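(* Let $(\mathscr C,A,\psi)$ be an entwining structure with $A$ finite dimensional over $K$ such that there exists a normalized cointegral $\gamma=\{\gamma_{X}:A^*\otimes\mathscr C(X,X)\longrightarrow A\}_{X\in Ob(\mathscr C)}$. Then a morphism $\phi:\mathcal M\longrightarrow\mathcal M'$ in ${_A^{\mathscr C}}Ctr(\psi)$ has a section (resp. a retraction) in ${_A^{\mathscr C}}Ctr(\psi)$ if and only if it has a section (resp. a retraction) in ${^{\mathscr C}}Ctr$.
   Context: $K$ is a field, $(U',U):=Hom_K(U',U)$. $\mathscr C$ is a coalgebra with several objects ($\delta_{XYZ}:\mathscr C(X,Z)\to\mathscr C(Y,Z)\otimes\mathscr C(X,Y)$, counits $\epsilon_X$). $(\mathscr C,A,\psi)$ is an entwining structure: $A$ a $K$-algebra with multiplication $\mu_A$ and unit $u_A$, $\psi_{XY}:\mathscr C(X,Y)\otimes A\to A\otimes\mathscr C(X,Y)$, $f\otimes a\mapsto a_\psi\otimes f^\psi$, with $a_\psi\otimes\delta_{XYZ}(f^\psi)=a_{\psi\psi}\otimes f_{Y1}^\psi\otimes f_{Y2}^\psi$, $(ab)_\psi\otimes f^\psi=a_\psi b_\psi\otimes f^{\psi\psi}$, $\psi(f\otimes1)=1\otimes f$, $a_\psi\epsilon_Z(g^\psi)=\epsilon_Z(g)a$. ${^\mathscr C}Ctr$ is the category of left $\mathscr C$-contramodules ($\pi_{XY}:(\mathscr C(X,Y),\mathcal M(Y))\to\mathcal M(X)$, coassociative and counital) and ${_A^{\mathscr C}}Ctr(\psi)$ the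 category of entwined contramodules (contramodules with left $A$-module structures $\mu_X:\mathcal M(X)\to(A,\mathcal M(X))$ satisfying $\mu_X\circ\pi_{XY}=(A,\pi_{XY})\circ(\psi_{XY},\mathcal M(Y))\circ(\mathscr C(X,Y),\mu_Y)$, morphisms objectwise $A$-linear). $coev_A:K\to A\otimes A^*$, $1\mapsto\sum_i a_i\otimes a_i^*$ for a basis $\{a_i\}$ with dual basis $\{a_i^*\}$. A normalized cointegral is a family of linear maps $\gamma_X:A^*\otimes\mathscr C(X,X)\to A$ with: (1) $(A\otimes\psi_{XY})\circ(\psi_{XY}\otimes\gamma_X)\circ(\mathscr C(X,Y)\otimes coev_A\otimes\mathscr C(X,X))\circ\delta_{XXY}=(A\otimes\gamma_Y\otimes\mathscr C(X,Y))\circ(coev_A\otimes\delta_{XYY})$; (2) $(A\otimes\mu_A)\circ(A\otimes\gamma_X\otimes A)\circ(coev_A\otimes\mathscr C(X,X)\otimes A)=(\mu_A\otimes\gamma_X)\circ(A\otimes coev_A\otimes\mathscr C(X,X))\circ\psi_{XX}$; (3) $\mu_A\circ(A\otimes\gamma_X)\circ(coev_A\otimes\mathscr C(X,X))=u_A\circ\epsilon_X$. *)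

(* Tensor products are represented in Sweedler style: an element of U (x) V
   is a finite list of pairs (u_i, v_i) standing for sum_i u_i (x) v_i, and
   two such lists are identified when every (multi)linear map out of the
   tensor product (i.e. every bilinear map) takes the same value on them. *)
From HB Require Import structures.
From mathcomp Require Import all_boot all_order all_algebra.
Set Implicit Arguments. Unset Strict Implicit. Unset Printing Implicit Defensive.
Import GRing.Theory.
Local Open Scope ring_scope.

Section Defs.
Variable K : fieldType.

Definition lmap (U V : lmodType K) (f : U -> V) :=
  forall (k : K) (u v : U), f (k *: u + v) = k *: f u + f v.
Definition slin (U : lmodType K) (f : U -> K) :=
  forall (k : K) (u v : U), f (k *: u + v) = k * f u + f v.
Definition bilin (U V W : lmodType K) (b : U -> V -> W) :=
  (forall v, lmap (fun u => b u v)) /\ (forall u, lmap (b u)).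
Definition trilin (U V T W : lmodType K) (b : U -> V -> T -> W) :=
  [/\ (forall v t, lmap (fun u => b u v t)),
      (forall u t, lmap (fun v => b u v t)) &
      (forall u v, lmap (b u v))].

Definition teq2 (U V : lmodType K) (s t : seq (U * V)) :=
  forall (W : lmodType K) (b : U -> V -> W), bilin b ->
    \sum_(p <- s) b p.1 p.2 = \sum_(p <- t) b p.1 p.2.
Definition teq3 (U V T : lmodType K) (s t : seq (U * V * T)) :=
  forall (W : lmodType K) (b : U -> V -> T -> W), trilin b ->
    \sum_(p <- s) b p.1.1 p.1.2 p.2 = \sum_(p <- t) b p.1.1 p.1.2 p.2.

Definition tlin (U V W : lmodType K) (F : U -> seq (V * W)) :=
  forall (Z : lmodType K) (b : V -> W -> Z), bilin b ->
    lmap (fun u => \sum_(p <- F u) b p.1 p.2).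
Definition tbilin (U U' V W : lmodType K) (F : U -> U' -> seq (V * W)) :=
  forall (Z : lmodType K) (b : V -> W -> Z), bilin b ->
    bilin (fun u u' => \sum_(p <- F u u') b p.1 p.2).

Section Coalg.
Variables (O : Type) (C : O -> O -> lmodType K).
Variable delta : forall X Y Z : O, C X Z -> seq (C Y Z * C X Y).
Variable eps : forall X : O, C X X -> K.
Arguments delta : clear implicits.
Arguments eps : clear implicits.

Definition is_coalgebra :=
  [/\ (forall X Y Z, tlin (delta X Y Z)),
      (forall X, slin (eps X)),
      (forall X Y W Z (f : C X Z),
         teq3 [seq (q.1, q.2, p.2) | p <- delta X Y Z f, q <- delta Y W Z p.1]
              [seq (p.1, q.1, q.2) | p <- delta X W Z f, q <- delta X Y W p.2]),
      (forall X Z (f : C X Z), \sum_(p <- delta X Z Z f) eps Z p.1 *: p.2 = f) &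
      (forall X Z (f : C X Z), \sum_(p <- delta X X Z f) eps X p.2 *: p.1 = f)].

Variable A : algType K.
(* psi X Y f a represents psi_XY (f (x) a) = a_psi (x) f^psi *)
Variable psi : forall X Y : O, C X Y -> A -> seq (A * C X Y).
Arguments psi : clear implicits.

Definition is_entwining :=
  [/\ (forall X Y, tbilin (psi X Y)),
      (forall X Y Z (f : C X Z) (a : A),
         teq3 [seq (p.1, q.1, q.2) | p <- psi X Z f a, q <- delta X Y Z p.2]
              (flatten [seq [seq (r.1, r.2, q.2) | q <- psi X Y p.2 a,
                                                   r <- psi Y Z p.1 q.1]
                       | p <- delta X Y Z f])),
      (forall X Y (f : C X Y) (a b : A),
         teq2 (psi X Y f (a * b))
              [seq (p.1 * q.1, q.2) | p <- psi X Y f a, q <- psi X Y p.2 b]),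
      (forall X Y (f : C X Y), teq2 (psi X Y f 1) [:: (1, f)]) &
      (forall Z (g : C Z Z) (a : A),
         \sum_(p <- psi Z Z g a) eps Z p.2 *: p.1 = eps Z g *: a)].

(* b is a basis of A (indexed by 'I_n, so A is finite dimensional) and
   bstar its dual basis *)
Definition basis_dual (n : nat) (b : 'I_n -> A) (bstar : 'I_n -> A -> K) :=
  [/\ (forall i, slin (bstar i)),
      (forall i j, bstar j (b i) = (i == j)%:R) &
      (forall a : A, exists c : 'I_n -> K, a = \sum_i c i *: b i)].

(* coev_A(1) = sum_i a_i (x) a_i^* *)
Definition coev n (b : 'I_n -> A) (bstar : 'I_n -> A -> K) : seq (A * (A -> K)) :=
  [seq (b i, bstar i) | i <- enum 'I_n].

(* normalized cointegral; gamma X l f represents gamma_X (l (x) f) *)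
Definition normalized_cointegral n (b : 'I_n -> A) (bstar : 'I_n -> A -> K)
    (gamma : forall X : O, (A -> K) -> C X X -> A) :=
  let s := coev b bstar in
  [/\ (forall X l, slin l -> lmap (gamma X l)),
      (forall X (f : C X X) (k : K) (l1 l2 : A -> K), slin l1 -> slin l2 ->
         gamma X (fun a => k * l1 a + l2 a) f = k *: gamma X l1 f + gamma X l2 f),
      (forall X Y (f : C X Y),
         teq3 (flatten [seq flatten [seq [seq (p.1, q.1, q.2)
                                         | p <- psi X Y u.1 c.1,
                                           q <- psi X Y p.2 (gamma X c.2 u.2)]
                                    | c <- s]
                       | u <- delta X X Y f])
              [seq (c.1, gamma Y c.2 w.1, w.2) | c <- s, w <- delta X Y Y f]),
      (forall X (f : C X X) (a : A),
         teq2 [seq (c.1, gamma X c.2 f * a) | c <- s]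
              [seq (p.1 * c.1, gamma X c.2 p.2) | p <- psi X X f a, c <- s]) &
      (forall X (f : C X X), \sum_(c <- s) c.1 * gamma X c.2 f = eps X f *: 1)].

(* left C-contramodules: pi X Y g represents pi_XY (g), g in Hom_K(C(X,Y), M(Y));
   pi is only constrained on K-linear arguments g *)
Definition is_contramodule (M : O -> lmodType K)
    (pi : forall X Y : O, (C X Y -> M Y) -> M X) :=
  [/\ (forall X Y (k : K) (g1 g2 : C X Y -> M Y), lmap g1 -> lmap g2 ->
         pi X Y (fun f => k *: g1 f + g2 f) = k *: pi X Y g1 + pi X Y g2),
      (forall X Y Z (g : C X Y -> C Y Z -> M Z), bilin g ->
         pi X Y (fun f => pi Y Z (g f))
         = pi X Z (fun h => \sum_(p <- delta X Y Z h) g p.2 p.1)) &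
      (forall X (m : M X), pi X X (fun f => eps X f *: m) = m)].

Definition is_contra_morphism (M M' : O -> lmodType K)
    (pi : forall X Y : O, (C X Y -> M Y) -> M X)
    (pi' : forall X Y : O, (C X Y -> M' Y) -> M' X)
    (phi : forall X : O, M X -> M' X) :=
  (forall X, lmap (phi X)) /\
  (forall X Y (g : C X Y -> M Y), lmap g ->
     phi X (pi X Y g) = pi' X Y (fun f => phi Y (g f))).

(* entwined contramodules: mu X m a represents a . m *)
Definition is_entwined_contramodule (M : O -> lmodType K)
    (pi : forall X Y : O, (C X Y -> M Y) -> M X) (mu : forall X : O, M X -> A -> M X) :=
  [/\ is_contramodule pi,
      (forall X, bilin (mu X)),
      (forall X (m : M X), mu X m 1 = m),
      (forall X (m : M X) (a b : A), mu X m (a * b) = mu X (mu X m b) a) &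
      (forall X Y (g : C X Y -> M Y) (a : A), lmap g ->
         mu X (pi X Y g) a
         = pi X Y (fun f => \sum_(p <- psi X Y f a) mu Y (g p.2) p.1))].

Definition is_entwined_morphism (M M' : O -> lmodType K)
    (pi : forall X Y : O, (C X Y -> M Y) -> M X)
    (pi' : forall X Y : O, (C X Y -> M' Y) -> M' X)
    (mu : forall X : O, M X -> A -> M X) (mu' : forall X : O, M' X -> A -> M' X)
    (phi : forall X : O, M X -> M' X) :=
  is_contra_morphism pi pi' phi /\
  (forall X (m : M X) (a : A), phi X (mu X m a) = mu' X (phi X m) a).

Definition has_section_contra (M M' : O -> lmodType K) pi pi' (phi : forall X : O, M X -> M' X) :=
  exists s : forall X : O, M' X -> M X,
    @is_contra_morphism M' M pi' pi s /\ forall X (m : M' X), phi X (s X m) = m.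
Definition has_retraction_contra (M M' : O -> lmodType K) pi pi' (phi : forall X : O, M X -> M' X) :=
  exists r : forall X : O, M' X -> M X,
    @is_contra_morphism M' M pi' pi r /\ forall X (m : M X), r X (phi X m) = m.
Definition has_section_entwined (M M' : O -> lmodType K) pi pi' mu mu' (phi : forall X : O, M X -> M' X) :=
  exists s : forall X : O, M' X -> M X,
    @is_entwined_morphism M' M pi' pi mu' mu s /\ forall X (m : M' X), phi X (s X m) = m.
Definition has_retraction_entwined (M M' : O -> lmodType K) pi pi' mu mu' (phi : forall X : O, M X -> M' X) :=
  exists r : forall X : O, M' X -> M X,
    @is_entwined_morphism M' M pi' pi mu' mu r /\ forall X (m : M X), r X (phi X m) = m.

End Coalg.
End Defs.

(* For a contramodule map t : M' -> M, the average against the cointegral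
     avg t (m') = pi_XX (f |-> sum_i a_i . t (gamma_X (a_i^* (x) f) . m'))
   is a morphism of entwined contramodules: cointegral axiom (2) makes it
   A-linear and axiom (1) makes it commute with the structure maps pi.  By the
   normalization (3), avg t = t when t is already A-linear, and averaging
   commutes with composition by A-linear maps on either side.  Hence for a
   section s of phi in Ctr, phi (avg s) = avg (phi s) = phi s = id, and for a
   retraction r, avg r (phi m) = avg (r phi) m = r (phi m) = m. *)

From HB Require Import structures.
From mathcomp Require Import all_boot all_order all_algebra.
From Stdlib Require Import FunctionalExtensionality.
Import GRing.Theory.
Local Open Scope ring_scope.

Section LinearMaps.
Context {K : fieldType} {U V W T : lmodType K}.

Lemma lmap0 {f : U -> V} (hf : lmap f) : f 0 = 0.
Proof.
have := hf 1 0 0; rewrite !scale1r !addr0 => /(congr1 (fun x => x - f 0)).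
by rewrite subrr addrK; move/esym.
Qed.

Lemma lmapD {f : U -> V} (hf : lmap f) u v : f (u + v) = f u + f v.
Proof. by have := hf 1 u v; rewrite !scale1r. Qed.

Lemma lmapZ {f : U -> V} (hf : lmap f) k u : f (k *: u) = k *: f u.
Proof. by rewrite -[k *: u]addr0 hf lmap0 // addr0. Qed.

Lemma lmap_sum {f : U -> V} (hf : lmap f) {I : Type} (s : seq I) (F : I -> U) :
  f (\sum_(i <- s) F i) = \sum_(i <- s) f (F i).
Proof.
elim: s => [|i s IH]; first by rewrite !big_nil lmap0.
by rewrite !big_cons lmapD // IH.
Qed.

Lemma lmap_sumf {I : Type} (s : seq I) (G : I -> U -> V) :
  (forall i, lmap (G i)) -> lmap (fun u => \sum_(i <- s) G i u).
Proof.
move=> hG k u v; elim: s => [|i s IH]; first by rewrite !big_nil scaler0 addr0.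
by rewrite !big_cons hG IH scalerDr addrACA.
Qed.

Lemma lmap_comp {f : V -> W} {g : U -> V} :
  lmap f -> lmap g -> lmap (fun u => f (g u)).
Proof. by move=> hf hg k u v; rewrite hg hf. Qed.

Lemma trilin_bilin {B : U -> V -> T -> W} u : trilin B -> bilin (B u).
Proof. by case=> _ hV hT; split; [apply: hV | apply: hT]. Qed.

Definition lmap_on_lmaps (p : (U -> V) -> W) :=
  forall k (g1 g2 : U -> V), lmap g1 -> lmap g2 ->
    p (fun u => k *: g1 u + g2 u) = k *: p g1 + p g2.

Lemma lmap_on_lmaps_sum {p : (U -> V) -> W} {I : Type} (s : seq I) {G : I -> U -> V} :
  lmap_on_lmaps p -> (forall i, lmap (G i)) ->
  p (fun u => \sum_(i <- s) G i u) = \sum_(i <- s) p (G i).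
Proof.
move=> hp hG; have lmap_zero : lmap (fun _ : U => 0 : V).
  by move=> k u v; rewrite scaler0 addr0.
elim: s => [|i s IH].
  rewrite big_nil -[RHS](addNr (p (fun _ => 0))) -scaleN1r -hp //.
  by congr p; apply: functional_extensionality => u; rewrite big_nil scaler0 addr0.
rewrite big_cons -IH -[p (G i)]scale1r -hp //; last exact: lmap_sumf.
by congr p; apply: functional_extensionality => u; rewrite big_cons scale1r.
Qed.

End LinearMaps.

Section Entwined.
Context {K : fieldType} {O : Type} {C : O -> O -> lmodType K}.
Context {delta : forall X Y Z : O, C X Z -> seq (C Y Z * C X Y)}.
Context {eps : forall X : O, C X X -> K}.
Context {A : algType K} {psi : forall X Y : O, C X Y -> A -> seq (A * C X Y)}.

Section EntwinedContramodule.
Context {M : O -> lmodType K} { pi : forall X Y : O, (C X Y -> M Y) -> M X}.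
Context {mu : forall X : O, M X -> A -> M X}.
Hypothesis entM : is_entwined_contramodule delta eps psi pi mu.

Lemma act_lmapl X a : lmap (fun m => mu X m a).
Proof. by case: entM => _ muB _ _ _; apply: (muB X).1. Qed.

Lemma act_lmapr X (m : M X) : lmap (mu X m).
Proof. by case: entM => _ muB _ _ _; apply: (muB X).2. Qed.

Lemma act_suml X a I (s : seq I) (F : I -> M X) :
  mu X (\sum_(i <- s) F i) a = \sum_(i <- s) mu X (F i) a.
Proof. exact: (lmap_sum (act_lmapl X a) s F). Qed.

Lemma act_sumr X (m : M X) I (s : seq I) (F : I -> A) :
  mu X m (\sum_(i <- s) F i) = \sum_(i <- s) mu X m (F i).
Proof. exact: (lmap_sum (act_lmapr X m) s F). Qed.

Lemma act1 X (m : M X) : mu X m 1 = m.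
Proof. by case: entM => _ _ mu1 _ _; apply: mu1. Qed.

Lemma actM X (m : M X) a a' : mu X m (a * a') = mu X (mu X m a') a.
Proof. by case: entM => _ _ _ muM _; apply: muM. Qed.

Lemma act_pi X Y (g : C X Y -> M Y) a : lmap g ->
  mu X (pi X Y g) a = pi X Y (fun f => \sum_(p <- psi X Y f a) mu Y (g p.2) p.1).
Proof. by case: entM => _ _ _ _ muPi; apply: muPi. Qed.

Lemma pi_lmap X Y : lmap_on_lmaps (pi X Y).
Proof. by case: entM => -[piL _ _] _ _ _ _; apply: piL. Qed.

Lemma pi_sum X Y I (s : seq I) (G : I -> C X Y -> M Y) : (forall i, lmap (G i)) ->
  pi X Y (fun f => \sum_(i <- s) G i f) = \sum_(i <- s) pi X Y (G i).
Proof. exact: lmap_on_lmaps_sum (pi_lmap X Y). Qed.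

Lemma pi_assoc X Y Z (g : C X Y -> C Y Z -> M Z) : bilin g ->
  pi X Y (fun f => pi Y Z (g f))
  = pi X Z (fun h => \sum_(p <- delta X Y Z h) g p.2 p.1).
Proof. by case: entM => -[_ piA _] _ _ _ _; apply: piA. Qed.

Lemma pi_counit X (m : M X) : pi X X (fun f => eps X f *: m) = m.
Proof. by case: entM => -[_ _ piU] _ _ _ _; apply: piU. Qed.

End EntwinedContramodule.

Hypothesis entwining : is_entwining delta eps psi.

Lemma psi_sum_lmapl {W : lmodType K} X Y (B : A -> C X Y -> W) a : bilin B ->
  lmap (fun f => \sum_(p <- psi X Y f a) B p.1 p.2).
Proof. by case: entwining => psiL _ _ _ _ hB; apply: (psiL X Y W B hB).1. Qed.

Lemma psi_sum_lmapr {W : lmodType K} X Y (B : A -> C X Y -> W) f : bilin B ->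
  lmap (fun a => \sum_(p <- psi X Y f a) B p.1 p.2).
Proof. by case: entwining => psiL _ _ _ _ hB; apply: (psiL X Y W B hB).2. Qed.

Lemma psi_sum_bilin {W : lmodType K} X Y (B : A -> A -> C X Y -> W) a : trilin B ->
  bilin (fun x h => \sum_(q <- psi X Y h a) B x q.1 q.2).
Proof.
move=> hB; split=> [h|x]; last exact/psi_sum_lmapl/trilin_bilin.
by apply: lmap_sumf => q; case: hB => hA _ _; apply: hA.
Qed.

Context {n : nat} {b : 'I_n -> A} {bstar : 'I_n -> A -> K}.
Context {gamma : forall X : O, (A -> K) -> C X X -> A}.
Hypothesis dual : basis_dual b bstar.
Hypothesis cointegral : normalized_cointegral delta eps psi b bstar gamma.

Lemma gamma_lmap X i : lmap (gamma X (bstar i)).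
Proof. by case: dual cointegral => bsL _ _ [gL _ _ _ _]; apply: gL. Qed.

Lemma big_coev (W : zmodType) (F : A * (A -> K) -> W) :
  \sum_(c <- coev b bstar) F c = \sum_i F (b i, bstar i).
Proof. by rewrite big_map big_enum. Qed.

Lemma cointegral_coassoc {W : lmodType K} X Y (B : A -> A -> C X Y -> W) h :
  trilin B ->
  \sum_(u <- delta X X Y h) \sum_i \sum_(p <- psi X Y u.1 (b i))
      \sum_(q <- psi X Y p.2 (gamma X (bstar i) u.2)) B p.1 q.1 q.2
  = \sum_i \sum_(w <- delta X Y Y h) B (b i) (gamma Y (bstar i) w.1) w.2.
Proof.
case: cointegral => _ _ coassoc _ _ hB; have := coassoc X Y h W B hB.
rewrite big_flatten big_map big_allpairs_dep big_coev => <-.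
apply: eq_bigr => u _; rewrite big_flatten big_map big_coev.
by apply: eq_bigr => i _; rewrite big_allpairs_dep.
Qed.

Lemma cointegral_act {W : lmodType K} X (B : A -> A -> W) f a : bilin B ->
  \sum_i B (b i) (gamma X (bstar i) f * a)
  = \sum_(p <- psi X X f a) \sum_i B (p.1 * b i) (gamma X (bstar i) p.2).
Proof.
case: cointegral => _ _ _ act _ hB; have := act X f a W B hB.
rewrite big_map big_coev big_allpairs_dep => ->.
by apply: eq_bigr => p _; rewrite big_coev.
Qed.

Lemma cointegral_unit X f : \sum_i b i * gamma X (bstar i) f = eps X f *: 1.
Proof. by case: cointegral => _ _ _ _ <-; rewrite big_coev. Qed.

Section CointegralAction.
Context {M : O -> lmodType K} { pi : forall X Y : O, (C X Y -> M Y) -> M X}.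
Context {mu : forall X : O, M X -> A -> M X}.
Hypothesis entM : is_entwined_contramodule delta eps psi pi mu.

Lemma act_cointegral X (m : M X) f :
  \sum_i mu X (mu X m (gamma X (bstar i) f)) (b i) = eps X f *: m.
Proof.
under eq_bigr do rewrite -(actM entM).
by rewrite -(act_sumr entM) cointegral_unit (lmapZ (act_lmapr entM X m)) (act1 entM).
Qed.

End CointegralAction.

Definition avg {N N' : O -> lmodType K} (piN : forall X Y : O, (C X Y -> N Y) -> N X)
    (muN : forall X : O, N X -> A -> N X) (muN' : forall X : O, N' X -> A -> N' X)
    (t : forall X : O, N' X -> N X) (X : O) (m : N' X) : N X :=
  piN X X (fun f => \sum_i muN X (t X (muN' X m (gamma X (bstar i) f))) (b i)).

Section Averaging.
Context {M1 M2 M3 : O -> lmodType K}.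
Context { pi1 : forall X Y : O, (C X Y -> M1 Y) -> M1 X}.
Context { pi2 : forall X Y : O, (C X Y -> M2 Y) -> M2 X}.
Context { pi3 : forall X Y : O, (C X Y -> M3 Y) -> M3 X}.
Context {mu1 : forall X : O, M1 X -> A -> M1 X} {mu2 : forall X : O, M2 X -> A -> M2 X}.
Context {mu3 : forall X : O, M3 X -> A -> M3 X}.
Hypothesis ent1 : is_entwined_contramodule delta eps psi pi1 mu1.
Hypothesis ent2 : is_entwined_contramodule delta eps psi pi2 mu2.

Lemma avg_integrand_lmap (t : forall X, M1 X -> M2 X) X (m : M1 X) :
  (forall X, lmap (t X)) ->
  lmap (fun f => \sum_i mu2 X (t X (mu1 X m (gamma X (bstar i) f))) (b i)).
Proof.
move=> tL; apply: lmap_sumf => i.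
exact/(lmap_comp (act_lmapl ent2 X _))/(lmap_comp (tL X))
      /(lmap_comp (act_lmapr ent1 X m))/gamma_lmap.
Qed.

Lemma avg_lmap (t : forall X, M1 X -> M2 X) X :
  (forall X, lmap (t X)) -> lmap (avg pi2 mu2 mu1 t X).
Proof.
move=> tL k u v; rewrite /avg -(pi_lmap ent2); try exact: avg_integrand_lmap.
congr pi2; apply: functional_extensionality => f.
rewrite scaler_sumr -big_split; apply: eq_bigr => i _ /=.
by rewrite (act_lmapl ent1) tL (act_lmapl ent2).
Qed.

Lemma avg_act (t : forall X, M1 X -> M2 X) X (m : M1 X) a :
  (forall X, lmap (t X)) ->
  avg pi2 mu2 mu1 t X (mu1 X m a) = mu2 X (avg pi2 mu2 mu1 t X m) a.
Proof.
move=> tL; rewrite /avg (act_pi ent2); last exact: avg_integrand_lmap.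
congr pi2; apply: functional_extensionality => f.
under eq_bigr do rewrite -(actM ent1).
rewrite (cointegral_act X (fun x y => mu2 X (t X (mu1 X m y)) x)).
  apply: eq_bigr => p _; rewrite (act_suml ent2).
  by apply: eq_bigr => i _; rewrite (actM ent2).
split=> [y|x]; first exact: (act_lmapr ent2).
exact/(lmap_comp (act_lmapl ent2 X x))/(lmap_comp (tL X))/(act_lmapr ent1).
Qed.

Lemma avg_Alinear (t : forall X, M1 X -> M2 X) X (m : M1 X) :
  (forall X, lmap (t X)) ->
  (forall X (m : M1 X) a, t X (mu1 X m a) = mu2 X (t X m) a) ->
  avg pi2 mu2 mu1 t X m = t X m.
Proof.
move=> tL tA; rewrite /avg -[RHS](pi_counit ent2); congr pi2.
apply: functional_extensionality => f; under eq_bigr do rewrite tA.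
exact: (act_cointegral ent2).
Qed.

Lemma avg_postcomp (t : forall X, M1 X -> M2 X) (phi : forall X, M2 X -> M3 X)
    X (m : M1 X) :
  (forall X, lmap (t X)) -> is_entwined_morphism pi2 pi3 mu2 mu3 phi ->
  phi X (avg pi2 mu2 mu1 t X m) = avg pi3 mu3 mu1 (fun Y m => phi Y (t Y m)) X m.
Proof.
move=> tL [[phiL phiPi] phiA]; rewrite /avg phiPi; last exact: avg_integrand_lmap.
congr pi3; apply: functional_extensionality => f.
by rewrite (lmap_sum (phiL X)); apply: eq_bigr => i _; apply: phiA.
Qed.

Lemma avg_precomp (phi : forall X, M1 X -> M2 X) (t : forall X, M2 X -> M3 X)
    X (m : M1 X) :
  (forall X (m : M1 X) a, phi X (mu1 X m a) = mu2 X (phi X m) a) ->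
  avg pi3 mu3 mu2 t X (phi X m) = avg pi3 mu3 mu1 (fun Y m => t Y (phi Y m)) X m.
Proof.
move=> phiA; rewrite /avg; congr pi3; apply: functional_extensionality => f.
by apply: eq_bigr => i _; rewrite phiA.
Qed.

Lemma act_morph_act_pi (t : forall X, M1 X -> M2 X) X Y (g : C X Y -> M1 Y) a a' :
  is_contra_morphism pi1 pi2 t -> lmap g ->
  mu2 X (t X (mu1 X (pi1 X Y g) a')) a
  = pi2 X Y (fun h => \sum_(r <- psi X Y h a) \sum_(q <- psi X Y r.2 a')
                         mu2 Y (t Y (mu1 Y (g q.2) q.1)) r.1).
Proof.
move=> [tL tPi] gL.
have gpsiL : lmap (fun h => \sum_(q <- psi X Y h a') mu1 Y (g q.2) q.1).
  apply: (psi_sum_lmapl X Y (fun y h => mu1 Y (g h) y)).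
  by split=> [h|y]; [apply: (act_lmapr ent1) | apply: (lmap_comp (act_lmapl ent1 Y y) gL)].
rewrite (act_pi ent1) // tPi // (act_pi ent2); last exact: (lmap_comp (tL Y) gpsiL).
congr pi2; apply: functional_extensionality => h; apply: eq_bigr => r _.
by rewrite (lmap_sum (tL Y)) (act_suml ent2).
Qed.

Lemma avg_pi (t : forall X, M1 X -> M2 X) X Y (g : C X Y -> M1 Y) :
  is_contra_morphism pi1 pi2 t -> lmap g ->
  avg pi2 mu2 mu1 t X (pi1 X Y g) = pi2 X Y (fun h => avg pi2 mu2 mu1 t Y (g h)).
Proof.
move=> tM gL; have [tL _] := tM.
pose B x y h := mu2 Y (t Y (mu1 Y (g h) y)) x.
have B_tri : trilin B.
  split=> [y h|x h|x y].
  - exact: (act_lmapr ent2).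
  - exact/(lmap_comp (act_lmapl ent2 Y x))/(lmap_comp (tL Y))/(act_lmapr ent1).
  - exact/(lmap_comp (act_lmapl ent2 Y x))/(lmap_comp (tL Y))
        /(lmap_comp (act_lmapl ent1 Y y)).
pose Hi i f h := \sum_(r <- psi X Y h (b i))
  \sum_(q <- psi X Y r.2 (gamma X (bstar i) f)) B r.1 q.1 q.2.
pose H f h := \sum_i Hi i f h.
have Hi_lmapr i f : lmap (Hi i f).
  exact: (psi_sum_lmapl X Y _ (b i) (psi_sum_bilin X Y B _ B_tri)).
have H_bilin : bilin H.
  split=> [h|f]; last by apply: lmap_sumf => i; apply: Hi_lmapr.
  apply: lmap_sumf => i; apply: lmap_sumf => r.
  have B_r := trilin_bilin r.1 B_tri.
  exact: (lmap_comp (psi_sum_lmapr X Y (B r.1) r.2 B_r) (gamma_lmap X i)).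
have lhsE : avg pi2 mu2 mu1 t X (pi1 X Y g) = pi2 X X (fun f => pi2 X Y (H f)).
  rewrite /avg; congr pi2; apply: functional_extensionality => f.
  rewrite (pi_sum ent2) //; apply: eq_bigr => i _.
  exact: act_morph_act_pi.
rewrite lhsE (pi_assoc ent2) // /avg.
rewrite (pi_assoc ent2 X Y Y (fun h f => \sum_i B (b i) (gamma Y (bstar i) f) h)).
  congr pi2; apply: functional_extensionality => h.
  by rewrite (cointegral_coassoc X Y B h B_tri) exchange_big.
split=> [f|h]; last exact: avg_integrand_lmap.
by apply: lmap_sumf => i; case: B_tri => _ _; apply.
Qed.

Lemma avg_entwined_morphism (t : forall X, M1 X -> M2 X) :
  is_contra_morphism pi1 pi2 t ->
  is_entwined_morphism pi1 pi2 mu1 mu2 (avg pi2 mu2 mu1 t).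
Proof.
move=> tM; have [tL _] := tM; split; last by move=> X m a; apply: avg_act.
by split=> [X|X Y g gL]; [apply: avg_lmap | apply: avg_pi].
Qed.

End Averaging.

Section Splitting.
Context {M M' : O -> lmodType K}.
Context { pi : forall X Y : O, (C X Y -> M Y) -> M X}.
Context { pi' : forall X Y : O, (C X Y -> M' Y) -> M' X}.
Context {mu : forall X : O, M X -> A -> M X} {mu' : forall X : O, M' X -> A -> M' X}.
Hypothesis entM : is_entwined_contramodule delta eps psi pi mu.
Hypothesis entM' : is_entwined_contramodule delta eps psi pi' mu'.

Lemma has_section_entwined_of_contra (phi : forall X, M X -> M' X) :
  is_entwined_morphism pi pi' mu mu' phi ->
  has_section_contra pi pi' phi -> has_section_entwined pi pi' mu mu' phi.
Proof.
move=> phiM [s [sM sK]]; have [[phiL _] _] := phiM; have [sL _] := sM.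
exists (avg pi mu mu' s); split; first exact: avg_entwined_morphism.
move=> X m'.
rewrite (avg_postcomp entM' entM s phi X m' sL phiM) (avg_Alinear entM') //.
- by move=> Y; apply: lmap_comp.
- by move=> Y m a; rewrite !sK.
Qed.

Lemma has_retraction_entwined_of_contra (phi : forall X, M X -> M' X) :
  is_entwined_morphism pi pi' mu mu' phi ->
  has_retraction_contra pi pi' phi -> has_retraction_entwined pi pi' mu mu' phi.
Proof.
move=> phiM [r [rM rK]]; have [[phiL _] phiA] := phiM; have [rL _] := rM.
exists (avg pi mu mu' r); split; first exact: avg_entwined_morphism.
move=> X m; rewrite (avg_precomp phi r X m phiA) (avg_Alinear entM) //.
- by move=> Y; apply: lmap_comp.
- by move=> Y m' a; rewrite !rK.
Qed.

End Splitting.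

End Entwined.

Theorem proposition7p4 (K : fieldType) (O : Type) (C : O -> O -> lmodType K)
  (delta : forall X Y Z : O, C X Z -> seq (C Y Z * C X Y))
  (eps : forall X : O, C X X -> K)
  (A : algType K) (psi : forall X Y : O, C X Y -> A -> seq (A * C X Y))
  (n : nat) (b : 'I_n -> A) (bstar : 'I_n -> A -> K)
  (gamma : forall X : O, (A -> K) -> C X X -> A)
  (M M' : O -> lmodType K)
  (pi : forall X Y : O, (C X Y -> M Y) -> M X)
  (pi' : forall X Y : O, (C X Y -> M' Y) -> M' X)
  (mu : forall X : O, M X -> A -> M X) (mu' : forall X : O, M' X -> A -> M' X)
  (phi : forall X : O, M X -> M' X) :
  is_coalgebra delta eps ->
  is_entwining delta eps psi ->
  basis_dual b bstar ->
  normalized_cointegral delta eps psi b bstar gamma ->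
  is_entwined_contramodule delta eps psi pi mu ->
  is_entwined_contramodule delta eps psi pi' mu' ->
  is_entwined_morphism pi pi' mu mu' phi ->
  (has_section_entwined pi pi' mu mu' phi <-> has_section_contra pi pi' phi) /\
  (has_retraction_entwined pi pi' mu mu' phi <-> has_retraction_contra pi pi' phi).
Proof.
move=> _ entwining dual cointegral entM entM' phiM; split; split.
- by case=> s [[sM _] sK]; exists s.
- exact: (has_section_entwined_of_contra entwining dual cointegral entM entM' phi phiM).
- by case=> r [[rM _] rK]; exists r.
- exact: (has_retraction_entwined_of_contra entwining dual cointegral entM entM' phi phiM).
Qed.
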